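(* Let $M$ be a layered Markov Transition Model, $\pi_e$ a deterministic evaluation policy, $\Phi$ any aggregation scheme, and $\mu=(\mu_h)_{h\in[H]}$ offline distributions with $\mu_h\in\Delta(\mathcal{X}_h\times\mathcal{A})$. Suppose $M$ has pushforward concentrability coefficient $\mathsf{C}_{\mathrm{pf}}=\mathsf{C}_{\mathcal{X}}\mathsf{C}_{\mathcal{A}}$ with respect to $\mu$. Then for every $\epsilon>0$ (for which the maximum defining $\bar{\mathsf{C}}_\epsilon$ is over a nonempty set), $\bar{\mathsf{C}}_\epsilon(M,\Phi,\mu)\le\mathsf{C}_{\mathrm{pf}}$.
   Context: Markov Transition Model $M=(\mathcal{X},\mathcal{A},T,H,\rho)$ with finite layered state space $\mathcal{X}_1\cup\dots\cup\mathcal{X}_H$, finite actions, $T(\cdot|x,a)$ supported on $\mathcal{X}_{h+1}$ for $x\in\mathcal{X}_h$, $\rho\in\Delta(\mathcal{X}_1)$. For $x\in\mathcal{X}_h$ write $\mu(x)=\sum_a\mu_h(x,a)$ and $\mu(a|x)=\mu_h(x,a)/\mu(x)$. Pushforward concentrability: there are $\mathsf{C}_{\mathcal{A}},\mathsf{C}_{\mathcal{X}}>0$ with (a) $\mu(a|x)\ge 1/\mathsf{C}_{\mathcal{A}}$ for all $x,a$; (b) $T(x'|x,a)/\mu(x')<\mathsf{C}_{\mathcal{X}}$ and $\rho(x)/\mu(x)<\mathsf{C}_{\mathcal{X}}$ for all $x,x',a$; then $\mathsf{C}_{\mathrm{pf}}=\mathsf{C}_{\mathcal{X}}\mathsf{C}_{\mathcal{A}}$.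 Aggregation scheme: $\Phi=\Phi_1\cup\dots\cup\Phi_H$, $\Phi_h$ a partition of $\mathcal{X}_h$. Aggregated transitions, for $\phi\in\Phi_h,\phi'\in\Phi_{h+1}$: $\bar T(\phi'|\phi,\pi)=\frac{\sum_{x\in\phi}\sum_{x'\in\phi'}\sum_a\pi(a|x)\mu_h(x,a)T(x'|x,a)}{\sum_{x\in\phi}\sum_a\pi(a|x)\mu_h(x,a)}$. Aggregated occupancy $\bar d_h^\pi(\phi)$: law of $\phi_h$ under $\phi_1\sim\bar\rho$, $\phi_{i+1}\sim\bar T(\cdot|\phi_i,\pi)$, with $\bar\rho(\phi)=\sum_{x\in\phi}\rho(x)$. Aggregated concentrability: $\bar{\mathsf{C}}_\epsilon(M,\Phi,\mu)=\max_h\max\{\frac{\sum_{\phi\in\mathcal{I}}\bar d_h^{\pi_e}(\phi)}{\sum_{\phi\in\mathcal{I}}\sum_{x\in\phi}\mu_h(x,\pi_e(x))}:\mathcal{I}\subseteq\Phi_h,\ \sum_{\phi\in\mathcal{I}}\bar d_h^{\pi_e}(\phi)\ge\epsilon\}$. *)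

(* Layers are indexed 0..H-1 (paper: 1..H). *)
From mathcomp Require Import all_boot all_order all_algebra.
Set Implicit Arguments. Unset Strict Implicit. Unset Printing Implicit Defensive.
Import Order.TTheory GRing.Theory Num.Theory.
Local Open Scope ring_scope.

Section MTM.
Variables (R : realFieldType) (X : nat -> finType) (A : finType).
Variable T : forall h, X h -> A -> X h.+1 -> R.
Variable rho : X 0%N -> R.
Variable mu : forall h, X h -> A -> R.
Variable pie : forall h, X h -> A.
Variable P : forall h, {set {set X h}}.

Definition mu_state h (x : X h) : R := \sum_(a : A) mu x a.

Definition pie_prob h (x : X h) (a : A) : R := (a == pie x)%:R.

Definition Tbar h (phi : {set X h}) (phi' : {set X h.+1}) : R :=
  (\sum_(x in phi) \sum_(x' in phi') \sum_(a : A) pie_prob x a * mu x a * T x a x')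
  / (\sum_(x in phi) \sum_(a : A) pie_prob x a * mu x a).

Fixpoint dbar (h : nat) : {set X h} -> R :=
  match h return {set X h} -> R with
  | 0 => fun phi => \sum_(x in phi) rho x
  | h'.+1 => fun phi' => \sum_(phi in P h') dbar phi * Tbar phi phi'
  end.

Definition agg_ratio h (I : {set {set X h}}) : R :=
  (\sum_(phi in I) dbar phi) / (\sum_(phi in I) \sum_(x in phi) mu x (pie x)).

Definition agg_admissible (eps : R) h (I : {set {set X h}}) : bool :=
  (I \subset P h) && (eps <= \sum_(phi in I) dbar phi).

(* max over admissible I at layer h (0 if none; all ratios are >= 0) *)
Definition Cbar_layer (eps : R) h : R :=
  \big[Num.max/0]_(I : {set {set X h}} | agg_admissible eps I) agg_ratio I.

Definition Cbar (H : nat) (eps : R) : R :=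
  \big[Num.max/0]_(h < H) Cbar_layer eps h.

Definition valid_setup (H : nat) : Prop :=
  [/\ (forall x, 0 <= rho x) /\ \sum_x rho x = 1,
      (forall h, (h.+1 < H)%N -> forall x a,
          (forall x', 0 <= T x a x') /\ \sum_(x' : X h.+1) T x a x' = 1),
      (forall h, (h < H)%N -> (forall (x : X h) a, 0 <= mu x a) /\
          \sum_(x : X h) \sum_(a : A) mu x a = 1)
    & (forall h, (h < H)%N -> partition (P h) [set: X h])].

Definition pushforward_conc (H : nat) (CX CA : R) : Prop :=
  [/\ 0 < CA, 0 < CX,
      (forall h, (h < H)%N -> forall (x : X h) a, 1 / CA <= mu x a / mu_state x),
      (forall h, (h.+1 < H)%N -> forall (x : X h) a (x' : X h.+1),
          T x a x' / mu_state x' < CX)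
    & (forall x : X 0%N, rho x / mu_state x < CX)].

End MTM.

(* Under pushforward concentrability every mu(x) is positive, mu_h(x, a) >= mu(x) / C_A, and
   T(x'|x, a) <= C_X mu(x').  The aggregated kernel Tbar(.|phi) averages the rows T(.|x, a) of
   phi, so Tbar(phi'|phi) <= C_X mu(phi'); since dbar_h is a probability on the blocks of Phi_h,
   this gives dbar_{h+1}(phi') <= C_X mu(phi') (and dbar_1 <= C_X mu by the rho condition).
   Summing over I and using mu(phi) <= C_A mu_h(phi, pi_e) bounds every ratio by C_X C_A. *)
From mathcomp Require Import all_boot all_order all_algebra.
Set Implicit Arguments. Unset Strict Implicit. Unset Printing Implicit Defensive.
Import Order.TTheory GRing.Theory Num.Theory.
Local Open Scope ring_scope.

Lemma ler_wpdivlMr (R : realFieldType) (x y z : R) :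
  0 <= y -> 0 <= z -> x <= y * z -> x / z <= y.
Proof.
move=> y0 z0 xyz; have [->|z_neq0] := eqVneq z 0; first by rewrite invr0 mulr0.
by rewrite ler_pdivrMr ?lt_def ?z_neq0.
Qed.

Lemma sum_partitionT (R : nmodType) (T : finType) (Q : {set {set T}}) (F : T -> R) :
  partition Q [set: T] -> \sum_(B in Q) \sum_(x in B) F x = \sum_x F x.
Proof.
move=> QT; rewrite -(big_trivIset _ (partition_trivIset QT)) (cover_partition QT).
by apply: eq_bigl => x; rewrite in_setT.
Qed.

Section AggregatedConcentrability.
Variables (R : realFieldType) (X : nat -> finType) (A : finType) (H : nat)
  (T : forall {h}, X h -> A -> X h.+1 -> R) (rho : X 0%N -> R)
  (mu : forall {h}, X h -> A -> R) (pie : forall {h}, X h -> A)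
  (P : forall h, {set {set X h}}) (CX CA : R).

Hypothesis setup : valid_setup (@T) rho (@mu) P H.
Hypothesis conc : pushforward_conc (@T) rho (@mu) H CX CA.

Local Notation mu_state := (mu_state (@mu)).
Local Notation pie_prob := (pie_prob R (@pie)).
Local Notation dbar := (dbar (@T) rho (@mu) (@pie) P).
Local Notation Tbar := (Tbar (@T) (@mu) (@pie)).

Lemma sum_pie_prob h (x : X h) (F : A -> R) :
  \sum_(a : A) pie_prob x a * F a = F (pie x).
Proof.
rewrite (bigD1 (pie x)) //= big1 ?addr0; first by rewrite /pie_prob eqxx mul1r.
by move=> a /negbTE a_neq; rewrite /pie_prob a_neq mul0r.
Qed.

Lemma mu_ge0 h (x : X h) a : (h < H)%N -> 0 <= mu x a.
Proof. by case: setup => _ _ /(_ h) hmu _ hH; exact: (hmu hH).1. Qed.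

Lemma T_ge0 h (x : X h) a x' : (h.+1 < H)%N -> 0 <= T x a x'.
Proof. by case: setup => _ /(_ h) hT _ _ hH; exact: ((hT hH) x a).1. Qed.

Lemma mu_state_gt0 h (x : X h) : (h < H)%N -> 0 < mu_state x.
Proof.
move=> hH; case: conc => CA_gt0 _ /(_ h hH x (pie x)) hmu _ _.
have ms_ge0 : 0 <= mu_state x by apply: sumr_ge0 => a _; exact: mu_ge0.
rewrite lt_def ms_ge0 andbT; apply: contraTneq hmu => ->.
by rewrite invr0 mulr0 -ltNge divr_gt0.
Qed.

Lemma mu_state_le h (x : X h) a : (h < H)%N -> mu_state x <= CA * mu x a.
Proof.
move=> hH; case: conc => CA_gt0 _ /(_ h hH x a) hmu _ _.
by move: hmu; rewrite ler_pdivrMr // mulrAC ler_pdivlMr ?mu_state_gt0 // mul1r mulrC.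
Qed.

Lemma T_le h (x : X h) a x' : (h.+1 < H)%N -> T x a x' <= CX * mu_state x'.
Proof.
move=> hH; case: conc => _ _ _ /(_ h hH x a x') hT _.
by apply: ltW; rewrite -ltr_pdivrMr ?mu_state_gt0.
Qed.

Lemma rho_le (x : X 0%N) : (0 < H)%N -> rho x <= CX * mu_state x.
Proof.
move=> hH; case: conc => _ _ _ _ /(_ x) hrho.
by apply: ltW; rewrite -ltr_pdivrMr ?mu_state_gt0.
Qed.

Lemma block_mass_gt0 h (phi : {set X h}) :
  (h < H)%N -> phi \in P h -> 0 < \sum_(x in phi) mu x (pie x).
Proof.
move=> hH phiP; case: setup => _ _ _ /(_ h hH) /and3P[_ _ P_neq0].
have /set0Pn[x0 x0phi] : phi != set0 by apply: contraNneq P_neq0 => <-.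
rewrite (bigD1 x0) //= ltr_wpDr ?sumr_ge0 // => [x _|]; first exact: mu_ge0.
case: conc => CA_gt0 _ _ _ _; rewrite -(pmulr_rgt0 _ CA_gt0).
exact: lt_le_trans (mu_state_gt0 x0 hH) (mu_state_le x0 (pie x0) hH).
Qed.

Lemma Tbar_ge0 h (phi : {set X h}) phi' : (h.+1 < H)%N -> 0 <= Tbar phi phi'.
Proof.
move=> hH; have hH' := ltnW hH.
apply: divr_ge0; apply: sumr_ge0 => x _; [apply: sumr_ge0 => x' _|];
  apply: sumr_ge0 => a _; rewrite ?mulr_ge0 ?ler0n ?mu_ge0 ?T_ge0 //.
Qed.

Lemma Tbar_le h (phi : {set X h}) (phi' : {set X h.+1}) :
  (h.+1 < H)%N -> phi \in P h -> Tbar phi phi' <= CX * \sum_(x' in phi') mu_state x'.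
Proof.
move=> hH phiP; have hH' := ltnW hH.
have CX_ge0 : 0 <= CX by case: conc => _ /ltW.
rewrite /Tbar; apply: ler_wpdivlMr.
- by rewrite mulr_ge0 // sumr_ge0 // => x' _; rewrite ltW ?mu_state_gt0.
- by under eq_bigr do rewrite sum_pie_prob; rewrite ltW ?block_mass_gt0.
rewrite mulrC mulr_suml; apply: ler_sum => x _.
rewrite exchange_big /=; under eq_bigr do rewrite -mulr_sumr -mulrA.
rewrite !sum_pie_prob ler_wpM2l ?mu_ge0 // mulr_sumr.
by apply: ler_sum => x' _; exact: T_le.
Qed.

Lemma sum_Tbar h (phi : {set X h}) :
  (h.+1 < H)%N -> phi \in P h -> \sum_(phi' in P h.+1) Tbar phi phi' = 1.
Proof.
move=> hH phiP; case: setup => _ hT _ hP.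
rewrite -mulr_suml exchange_big /=.
rewrite [X in X / _](_ : _ = \sum_(x in phi) \sum_a pie_prob x a * mu x a).
  rewrite divff // gt_eqF //; under eq_bigr do rewrite sum_pie_prob.
  exact: block_mass_gt0 (ltnW hH) phiP.
apply: eq_bigr => x _; rewrite (sum_partitionT (fun x' => \sum_a _) (hP _ hH)).
by rewrite exchange_big; apply: eq_bigr => a _; rewrite -mulr_sumr (hT h hH x a).2 mulr1.
Qed.

Lemma dbar_ge0 h (phi : {set X h}) : (h < H)%N -> 0 <= dbar phi.
Proof.
elim: h phi => [|h IH] phi hH /=.
  by case: setup => -[rho_ge0 _] _ _ _; apply: sumr_ge0.
by apply: sumr_ge0 => phi0 _; rewrite mulr_ge0 ?Tbar_ge0 ?IH // ltnW.
Qed.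

Lemma sum_dbar h : (h < H)%N -> \sum_(phi in P h) dbar phi = 1.
Proof.
case: setup => -[_ sum_rho] _ _ hP.
elim: h => [|h IH] hH /=; first by rewrite (sum_partitionT _ (hP _ hH)).
rewrite exchange_big /= -[RHS](IH (ltnW hH)); apply: eq_bigr => phi phiP.
by rewrite -mulr_sumr sum_Tbar ?mulr1.
Qed.

Lemma dbar_le h (phi : {set X h}) :
  (h < H)%N -> phi \in P h -> dbar phi <= CX * \sum_(x in phi) mu_state x.
Proof.
case: h phi => [|h] phi hH phiP /=.
  by rewrite mulr_sumr; apply: ler_sum => x _; exact: rho_le.
rewrite -[leRHS]mul1r -(sum_dbar (ltnW hH)) mulr_suml.
by apply: ler_sum => phi0 phi0P; rewrite ler_wpM2l ?dbar_ge0 ?Tbar_le // ltnW.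
Qed.

Lemma agg_ratio_le h (I : {set {set X h}}) :
  (h < H)%N -> I \subset P h -> agg_ratio (@T) rho (@mu) (@pie) P I <= CX * CA.
Proof.
move=> hH IP; case: conc => CA_gt0 CX_gt0 _ _ _.
apply: ler_wpdivlMr; first by rewrite mulr_ge0 // ltW.
  by apply: sumr_ge0 => phi _; apply: sumr_ge0 => x _; exact: mu_ge0.
rewrite mulr_sumr; apply: ler_sum => phi phiI.
apply: le_trans (dbar_le hH (subsetP IP _ phiI)) _.
rewrite -mulrA (ler_wpM2l (ltW CX_gt0)) // mulr_sumr.
by apply: ler_sum => x _; exact: mu_state_le.
Qed.

End AggregatedConcentrability.

Theorem mainTheorem8 (R : realFieldType) (X : nat -> finType) (A : finType)
  (H : nat)
  (T : forall h, X h -> A -> X h.+1 -> R) (rho : X 0%N -> R)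
  (mu : forall h, X h -> A -> R) (pie : forall h, X h -> A)
  (P : forall h, {set {set X h}}) (CX CA : R) :
  valid_setup T rho mu P H ->
  pushforward_conc T rho mu H CX CA ->
  forall eps : R, 0 < eps ->
  (exists h, exists I : {set {set X h}},
      (h < H)%N /\ agg_admissible T rho mu pie P eps I) ->
  Cbar T rho mu pie P H eps <= CX * CA.
Proof.
move=> setup conc eps _ _.
have CXCA_ge0 : 0 <= CX * CA by case: conc => CA_gt0 CX_gt0 *; rewrite mulr_ge0 ?ltW.
apply: bigmax_le => // -[h hH] _ /=; apply: bigmax_le => // I /andP[IP _].
exact (agg_ratio_le pie setup conc hH IP).
Qed.
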